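(* Let $H\in(0,1)$ and let $B^H$ be a fractional Brownian motion on $[0,1]$ with Hurst index $H$. Fix $n\ge1$ and let $\gamma_n$ be the maximal absolute value of the entries of the vector $\boldsymbol\Sigma_n^{-1}\mathbf{B}^H_n$. Then for all $m\ge1$ and $1\le k\le 2^{n+m-1}$, $$|\mu_n(m,k)|\le \gamma_n\cdot(2^n+1)\cdot 2^{-2(n+m)H}.$$
   Context: A fractional Brownian motion with Hurst index $H$ is a centered Gaussian process with $B^H(0)=0$ and covariance $r(s,t)=\mathbb{E}[B^H(s)B^H(t)]=\tfrac12(|s|^{2H}+|t|^{2H}-|s-t|^{2H})$. $t^n_i=i/2^n$, $\mathbf{B}^H_n=(B^H(t^n_0),\dots,B^H(t^n_{2^n}))$, $\boldsymbol\Sigma_n$ is the covariance matrix of $\mathbf{B}^H_n$ (which is singular since $B^H(0)=0$; $\boldsymbol\Sigma_n^{-1}$ denotes its generalized inverse, as in the paper). $\boldsymbol\alpha_n(m,k)=(B^H(t^{n+m}_{2k-2}),B^H(t^{n+m}_{2k-1}),B^H(t^{n+m}_{2k}))^\top$, $\boldsymbol\beta=(1/2,-1,1/2)^\top$, $\mu_n(m,k)=\boldsymbol\beta^\top\mathbb{E}[\boldsymbol\alpha_n(m,k)\mid\mathbf{B}^H_n]=\boldsymbol\beta^\top\boldsymbol\Sigma^{(m,k)}_n\boldsymbol\Sigma_n^{-1}\mathbf{B}^H_n$, where $\boldsymbol\Sigma^{(m,k)}_n$ is the $3\times(2^n+1)$ cross-covariance matrix of $\boldsymbol\alpha_n(m,k)$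 and $\mathbf{B}^H_n$. *)

From HB Require Import structures.
From mathcomp Require Import all_boot all_order all_algebra.
From mathcomp Require Import all_classical all_reals all_analysis.
Unset Printing Implicit Defensive.
Import Order.TTheory GRing.Theory Num.Theory.
Local Open Scope classical_set_scope.
Local Open Scope ring_scope.

Definition fbm_cov {R : realType} (H s t : R) : R :=
  (`|s| `^ (2 * H) + `|t| `^ (2 * H) - `|s - t| `^ (2 * H)) / 2.

Definition centered_gauss_law {R : realType} (v : R) (A : set R) : \bar R :=
  if v == 0 then (\1_A (0:R))%:E else normal_prob 0 (Num.sqrt v) A.

(* B is a fractional Brownian motion on [0,1] with Hurst index H under P:
   B(0) = 0, each B t is a random variable, and B is a centered Gaussian
   process with covariance fbm_cov H, i.e. every finite linear combination
   sum_i c_i B(t_i) is centered Gaussian with variance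
   sum_{i,j} c_i c_j r(t_i,t_j). *)
Definition is_fbm {d} {T : measurableType d} {R : realType}
  (P : probability T R) (H : R) (B : R -> T -> R) : Prop :=
  (forall w, B 0 w = 0) /\
  (forall t, 0 <= t <= 1 -> measurable_fun setT (B t)) /\
  (forall (K : nat) (c t : 'I_K -> R), (forall i, 0 <= t i <= 1) ->
     forall A : set R, measurable A ->
       P ((fun w => \sum_(i < K) c i * B (t i) w) @^-1` A) =
       centered_gauss_law (\sum_(i < K) \sum_(j < K) c i * c j * fbm_cov H (t i) (t j)) A).

Definition dyad {R : realType} (n i : nat) : R := i%:R / (2 ^ n)%:R.

Definition Sigma_n {R : realType} (H : R) (n : nat) : 'M[R]_((2 ^ n).+1) :=
  \matrix_(i, j) fbm_cov H (dyad n i) (dyad n j).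

Definition Bvec {T : Type} {R : realType} (B : R -> T -> R) (n : nat) (w : T)
  : 'cV[R]_((2 ^ n).+1) := \col_i B (dyad n i) w.

(* Sigma^{(m,k)}_n : cross-covariance of alpha_n(m,k) = (B(t^{n+m}_{2k-2}),
   B(t^{n+m}_{2k-1}), B(t^{n+m}_{2k}))^T with B^H_n *)
Definition Sigma_mk {R : realType} (H : R) (n m k : nat) : 'M[R]_(3, (2 ^ n).+1) :=
  \matrix_(l < 3, j < (2 ^ n).+1) fbm_cov H (dyad (n + m) (2 * k - 2 + l)) (dyad n j).

Definition beta_row {R : realType} : 'rV[R]_3 :=
  \row_(l < 3) (if l == 1 :> nat then -1 else 1 / 2).

Definition is_ginv {R : realType} {N : nat} (S G : 'M[R]_N) : Prop :=
  S *m G *m S = S.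

Definition mu_nmk {T : Type} {R : realType} (H : R) (B : R -> T -> R)
  (n m k : nat) (G : 'M[R]_((2 ^ n).+1)) (w : T) : R :=
  (beta_row *m Sigma_mk H n m k *m G *m Bvec B n w) 0 0.

Definition gamma_n {T : Type} {R : realType} (B : R -> T -> R) (n : nat)
  (G : 'M[R]_((2 ^ n).+1)) (w : T) : R :=
  \big[Num.max/0]_(j < (2 ^ n).+1) `|(G *m Bvec B n w) j 0|.

(* Write h = 2^-(n+m) and p = 2H.  The covariance is self-similar,
   r(x h, y h) = h^p r(x, y), so the j-th entry of beta^T Sigma^(m,k)_n is h^p/4
   times the difference of two second differences of |x|^p, centred at the odd
   integer 2k-1 and at 2k-1 - j 2^m (odd minus even, hence of modulus >= 1).
   For 0 < p <= 2 and |x| >= 1 such a second difference has modulus at most 2: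
   for p <= 1 because x^p is increasing and subadditive, for p > 1 because x^p
   is convex and x^(p-1) concave and subadditive.  So every entry is at most
   h^p, and mu_n(m,k) pairs 2^n+1 of them with coordinates of Sigma_n^-1 B_n,
   each bounded by gamma_n. *)

From HB Require Import structures.
From mathcomp Require Import all_boot all_order all_algebra.
From mathcomp Require Import all_classical all_reals all_analysis.
From mathcomp Require Import ring lra zify.
Import Order.TTheory GRing.Theory Num.Theory.
Local Open Scope ring_scope.

Section powR_inequalities.
Context {R : realType}.
Implicit Types p q s x y : R.

Lemma powR_midpoint_convex p x y : 1 <= p -> 0 <= x -> 0 <= y ->
  (2^-1 * x + 2^-1 * y) `^ p <= 2^-1 * x `^ p + 2^-1 * y `^ p.
Proof.
move=> p1 x0 y0.
rewrite {2 4}(_ : 2^-1 = 1 - 2^-1 :> R); last by rewrite {2}(splitr 1) div1r addrK.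
by apply: (convex_powR p1 (Itv01 _ _)) => //=;
  rewrite ?inE/= ?in_itv/= ?andbT // ?invr_ge0// invf_le1 ?ler1n.
Qed.

Lemma powR_midpoint_concave q x y : 0 < q -> q <= 1 -> 0 <= x -> 0 <= y ->
  2^-1 * x `^ q + 2^-1 * y `^ q <= (2^-1 * x + 2^-1 * y) `^ q.
Proof.
move=> q0 q1 x0 y0.
have powRK z : 0 <= z -> (z `^ q) `^ q^-1 = z.
  by move=> z0; rewrite -powRrM mulfV ?gt_eqF // powRr1.
have q_inv_ge1 : 1 <= q^-1 by rewrite invf_ge1.
have := powR_midpoint_convex _ _ _ q_inv_ge1 (powR_ge0 x q) (powR_ge0 y q).
rewrite !powRK // => h.
have := ge0_ler_powR (ltW q0) _ _ h.
rewrite -powRrM mulVf ?gt_eqF // powRr1 ?addr_ge0 ?mulr_ge0 ?invr_ge0 ?powR_ge0 //.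
by apply; rewrite nnegrE ?addr_ge0 ?mulr_ge0 ?invr_ge0 ?powR_ge0.
Qed.

Lemma powR_subadditive q x y : 0 < q -> q <= 1 -> 0 <= x -> 0 <= y ->
  (x + y) `^ q <= x `^ q + y `^ q.
Proof.
move=> q0 q1 x0 y0; have [xy0|xy_neq0] := eqVneq (x + y) 0.
  have [-> ->] : x = 0 /\ y = 0 by split; lra.
  by rewrite addr0 powR0 ?gt_eqF // addr0.
have xy_gt0 : 0 < x + y by rewrite lt_neqAle eq_sym xy_neq0 addr_ge0.
(* Normalising by [x + y], the claim follows from [a <= a `^ q] on [0, 1]. *)
have le_powR a : 0 <= a <= x + y -> a / (x + y) <= (a / (x + y)) `^ q.
  move=> /andP[a0 a_le]; have [->|a_neq0] := eqVneq a 0; first by rewrite mul0r powR_ge0.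
  apply: ger1_powR q1; rewrite divr_gt0 ?ler_pdivrMr ?mul1r //.
  by rewrite lt_neqAle eq_sym a_neq0.
have powR_split a : 0 <= a -> a `^ q = (a / (x + y)) `^ q * (x + y) `^ q.
  by move=> a0; rewrite -powRM ?divfK // ?divr_ge0 // ltW.
have hx := le_powR x (ltac:(apply/andP; split; lra)).
have hy := le_powR y (ltac:(apply/andP; split; lra)).
have sum1 : x / (x + y) + y / (x + y) = 1 by rewrite -mulrDl divff.
rewrite (powR_split x) // (powR_split y) // -mulrDl -{1}(mul1r ((x + y) `^ q)).
by rewrite ler_wpM2r ?powR_ge0 //; lra.
Qed.

Definition second_diff (f : R -> R) x := f (x - 1) + f (x + 1) - 2 * f x.

Lemma powR_increment_ge0_le1 q s : 0 < q -> q <= 1 -> 0 <= s ->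
  0 <= (s + 1) `^ q - s `^ q <= 1.
Proof.
move=> q0 q1 s0; apply/andP; split.
  by rewrite subr_ge0 ge0_ler_powR ?nnegrE ?(ltW q0) //; lra.
by rewrite lerBlDl; have := powR_subadditive _ _ _ q0 q1 s0 ler01; rewrite powR1.
Qed.

Lemma second_diff_powR_concave p s : 0 < p -> p <= 1 -> 1 <= s ->
  `|second_diff (fun x => x `^ p) s| <= 1.
Proof.
move=> p0 p1 s1; rewrite /second_diff.
have /andP[lo1 up1] := powR_increment_ge0_le1 _ (s - 1) p0 p1 (ltac:(lra)).
have /andP[lo2 up2] := powR_increment_ge0_le1 _ s p0 p1 (ltac:(lra)).
rewrite subrK in lo1 up1; rewrite ler_norml; apply/andP; split; lra.
Qed.

Lemma second_diff_powR_convex p s : 1 < p -> p <= 2 -> 1 <= s ->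
  0 <= second_diff (fun x => x `^ p) s <= 2.
Proof.
move=> p1 p2 s1; rewrite /second_diff.
have midE : 2^-1 * (s - 1) + 2^-1 * (s + 1) = s by field.
apply/andP; split.
  have := powR_midpoint_convex _ (s - 1) (s + 1) (ltW p1) (ltac:(lra)) (ltac:(lra)).
  by rewrite midE; lra.
(* With [q = p - 1], [x `^ p = x * x `^ q] turns the second difference into [s]
   times that of the concave [x `^ q], plus [(s + 1) `^ q - (s - 1) `^ q <= 2 `^ q]. *)
set q := p - 1; have q0 : 0 < q by rewrite /q; lra.
have q1 : q <= 1 by rewrite /q; lra.
have powR_mulq x : 0 <= x -> x `^ p = x * x `^ q by move=> x0; rewrite mulr_powRB1 //; lra.
rewrite !powR_mulq; try lra.
have concave := powR_midpoint_concave _ (s - 1) (s + 1) q0 q1 (ltac:(lra)) (ltac:(lra)).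
rewrite midE in concave.
have concave_term : s * ((s - 1) `^ q + (s + 1) `^ q - 2 * s `^ q) <= 0.
  by rewrite mulr_ge0_le0; lra.
have subadd := powR_subadditive _ (s - 1) 2 q0 q1 (ltac:(lra)) (ler0n R 2).
have two_powR : (2 : R) `^ q <= 2 by apply: ler1_powR; rewrite ?ler1n.
rewrite (_ : s - 1 + 2 = s + 1) in subadd; last by ring.
lra.
Qed.

Lemma second_diff_normpowR p x : 1 <= `|x| ->
  second_diff (fun y => `|y| `^ p) x = second_diff (fun y => y `^ p) `|x|.
Proof.
rewrite /second_diff; have [x0|x0] := leP 0 x => x1.
  rewrite ger0_norm // in x1 *.
  by rewrite (@ger0_norm _ (x - 1)) ?(@ger0_norm _ (x + 1)) //; lra.
rewrite ltr0_norm // in x1 *.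
rewrite (@ler0_norm _ (x - 1)) ?(@ler0_norm _ (x + 1)); try lra.
have -> : - (x - 1) = - x + 1 by ring.
have -> : - (x + 1) = - x - 1 by ring.
by rewrite (addrC ((- x + 1) `^ p)).
Qed.

Lemma norm_second_diff_normpowR_le2 p x : 0 < p -> p <= 2 -> 1 <= `|x| ->
  `|second_diff (fun y => `|y| `^ p) x| <= 2.
Proof.
move=> p0 p2 x1; rewrite second_diff_normpowR //.
have [p1|p1] := leP p 1.
  by rewrite (le_trans (second_diff_powR_concave _ _ p0 p1 x1)) ?ler1n.
have /andP[lo up] := second_diff_powR_convex _ _ p1 p2 x1.
by rewrite ger0_norm.
Qed.
End powR_inequalities.

Lemma odd_neq_norm_natrB_ge1 {R : realDomainType} (u v : nat) :
  odd u != odd v -> 1 <= `|u%:R - v%:R : R|.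
Proof.
have [uv|vu|->] := ltngtP u v; last by rewrite eqxx.
- by rewrite distrC -natrB ?(ltnW uv) // normr_nat ler1n subn_gt0.
- by rewrite -natrB ?(ltnW vu) // normr_nat ler1n subn_gt0.
Qed.

Lemma dyad_mulr_expn {R : realType} n m j :
  dyad n j = dyad (n + m) (j * 2 ^ m) :> R.
Proof.
have pow2_neq0 i : (2 ^ i)%:R != 0 :> R by rewrite pnatr_eq0 expn_eq0.
by rewrite /dyad expnD !natrM; field; rewrite !pow2_neq0.
Qed.

Section fbm_covariance.
Context {R : realType}.
Variable H : R.

Lemma fbm_cov_scale x y h : 0 <= h ->
  fbm_cov H (x * h) (y * h) = h `^ (2 * H) * fbm_cov H x y.
Proof.
by move=> h0; rewrite /fbm_cov -mulrBl !normrM (ger0_norm h0) !powRM //; ring.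
Qed.

Lemma fbm_cov_second_diff c t :
  2^-1 * fbm_cov H (c - 1) t - fbm_cov H c t + 2^-1 * fbm_cov H (c + 1) t =
  4^-1 * (second_diff (fun y => `|y| `^ (2 * H)) c -
          second_diff (fun y => `|y| `^ (2 * H)) (c - t)).
Proof.
rewrite /fbm_cov /second_diff.
have -> : c - 1 - t = c - t - 1 by ring.
have -> : c + 1 - t = c - t + 1 by ring.
by field; rewrite ?pnatr_eq0.
Qed.

Lemma beta_Sigma_mkE n m k (j : 'I_(2 ^ n).+1) : (0 < k)%N ->
  (beta_row *m Sigma_mk H n m k) 0 j =
  ((2 ^ (n + m))%:R^-1) `^ (2 * H) / 4 *
  (second_diff (fun y => `|y| `^ (2 * H)) (2 * k - 1)%:R -
   second_diff (fun y => `|y| `^ (2 * H)) ((2 * k - 1)%:R - (j * 2 ^ m)%:R)).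
Proof.
move=> k_gt0; set h : R := (2 ^ (n + m))%:R^-1.
have h_ge0 : 0 <= h by rewrite invr_ge0.
rewrite mxE !big_ord_recr big_ord0 /= add0r !mxE /= (dyad_mulr_expn n m) /dyad -/h.
set c : R := (2 * k - 1)%:R.
have grid_pointE l : (2 * k - 2 + l)%:R = c + l%:R - 1.
  by rewrite /c -natrD (_ : 2 * k - 1 + l = (2 * k - 2 + l).+1)%N -?natr1 ?addrK //; last lia.
rewrite !grid_pointE !fbm_cov_scale // addr0 addrK (_ : c + 2 - 1 = c + 1); last by ring.
by rewrite -[in RHS]mulrA -fbm_cov_second_diff; field; rewrite ?pnatr_eq0.
Qed.

Lemma norm_beta_Sigma_mk_le n m k (j : 'I_(2 ^ n).+1) :
  0 < H -> H < 1 -> (0 < m)%N -> (0 < k)%N ->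
  `|(beta_row *m Sigma_mk H n m k) 0 j| <= ((2 ^ (n + m))%:R^-1) `^ (2 * H).
Proof.
move=> H0 H1 m_gt0 k_gt0; rewrite beta_Sigma_mkE //.
set hp := _ `^ (2 * H); have hp_ge0 : 0 <= hp by rewrite powR_ge0.
have p_gt0 : 0 < 2 * H by lra.
have p_le2 : 2 * H <= 2 by lra.
have odd_center : odd (2 * k - 1).
  by rewrite (_ : 2 * k - 1 = (2 * k.-1).+1)%N /= ?oddM //; lia.
have center_ge1 : 1 <= `|(2 * k - 1)%:R : R| by rewrite normr_nat ler1n; lia.
have shifted_ge1 : 1 <= `|(2 * k - 1)%:R - (j * 2 ^ m)%:R : R|.
  by apply: odd_neq_norm_natrB_ge1; rewrite odd_center oddM oddX eqn0Ngt m_gt0 andbF.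
have := norm_second_diff_normpowR_le2 _ _ p_gt0 p_le2 center_ge1.
have := norm_second_diff_normpowR_le2 _ _ p_gt0 p_le2 shifted_ge1.
set a := second_diff _ _; set b := second_diff _ _ => b_le2 a_le2.
rewrite normrM ger0_norm ?divr_ge0 //.
have : `|b - a| <= 4 by rewrite (le_trans (ler_normB _ _)) //; lra.
by move=> /(ler_wpM2l (divr_ge0 hp_ge0 (ler0n _ 4))); rewrite divfK ?pnatr_eq0.
Qed.

End fbm_covariance.

Lemma norm_mulmx_row_col_le {R : realDomainType} N (c : 'rV[R]_N) (v : 'cV[R]_N) b M :
  (forall j, `|c 0 j| <= b) -> (forall j, `|v j 0| <= M) ->
  `|(c *m v) 0 0| <= M * N%:R * b.
Proof.
move=> c_le v_le; rewrite mxE (le_trans (ler_norm_sum _ _ _)) //.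
rewrite (_ : M * N%:R * b = \sum_(j < N) b * M); last first.
  by rewrite sumr_const card_ord -mulr_natr; ring.
by apply: ler_sum => j _; rewrite normrM ler_pM.
Qed.

Lemma le_gamma_n {T : Type} {R : realType} (B : R -> T -> R) n G w j :
  `|(G *m Bvec B n w) j 0| <= gamma_n B n G w.
Proof. exact: (le_bigmax _ (fun j => `|(G *m Bvec B n w) j 0|)). Qed.

Lemma powR2_dyadic {R : realType} N (H : R) :
  2 `^ (- (2 * N%:R * H)) = ((2 ^ N)%:R^-1) `^ (2 * H).
Proof.
rewrite (_ : - (2 * N%:R * H) = - N%:R * (2 * H)); last by ring.
by rewrite [LHS]powRrM powR_invn // natrX.
Qed.

Theorem lemma7 (d : measure_display) (T : measurableType d) (R : realType)
  (P : probability T R) (H : R) (B : R -> T -> R)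
  (H0 : 0 < H) (H1 : H < 1) (hB : is_fbm P H B)
  (n : nat) (hn : (1 <= n)%N)
  (G : 'M[R]_((2 ^ n).+1)) (hG : is_ginv (Sigma_n H n) G) :
  forall (m k : nat), (1 <= m)%N -> (1 <= k)%N -> (k <= expn 2 (n + m - 1))%N ->
  forall w : T,
    `|mu_nmk H B n m k G w| <=
      gamma_n B n G w * (2 ^ n + 1)%:R * (2 : R) `^ (- (2 * (n + m)%:R * H)).
Proof.
move=> m k m_gt0 k_gt0 _ w.
rewrite powR2_dyadic addn1 /mu_nmk -mulmxA.
apply: norm_mulmx_row_col_le => j.
- exact: norm_beta_Sigma_mk_le.
- exact: le_gamma_n.
Qed.
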